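(* Let $E,A\in\mathbb{R}^{n\times n}$ with $A$ nonsingular, and let $C$ be any matrix with $n$ columns such that for all $x\in\mathbb{R}^n$, $x\in\mathcal{C}(E,A)$ if and only if $Cx=0$. A symmetric matrix $P$ is a Lyapunov matrix for $(E,A)$ if and only if there exist scalars $\kappa_1,\kappa_2\ge 0$ such that $$P+\kappa_1C^TC>0,\qquad PA^{-1}E+E^TA^{-T}P-\kappa_2C^TC<0.$$
   Context: For $E,A\in\mathbb{R}^{n\times n}$ with $A$ nonsingular, $(E,A)$ denotes the linear descriptor system $E\dot x=Ax$. Its index is the smallest integer $k^*\ge 0$ with $\mathrm{Im}((A^{-1}E)^{k^*+1})=\mathrm{Im}((A^{-1}E)^{k^*})$, and its consistency space is $\mathcal{C}(E,A)=\mathrm{Im}((A^{-1}E)^{k^*})$. If $\mathcal{C}\neq\{0\}$, $A^{-1}E$ maps $\mathcal{C}$ bijectively onto itself; with $\tilde A$ the inverse of its restriction to $\mathcal{C}$, the system on $\mathcal{C}$ is equivalent to $\dot x=\tilde A x$. A symmetric matrix $P$ is a Lyapunov matrix for $(E,A)$ if $V(x)=x^TPx$ is positive on $\mathcal{C}\setminus\{0\}$ and its derivative along solutions, $\dot V=2x^TP\tilde A x$, is negative at every nonzero $x\in\mathcal{C}$. Inequalities $M>0$ ($M<0$) for symmetric $M$ mean positive (negative) definite. *)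

(* Real numbers are modelled by an arbitrary real closed
   field R (the statement is purely algebraic). *)
From HB Require Import structures.
From mathcomp Require Import all_boot all_order all_algebra.
Set Implicit Arguments. Unset Strict Implicit. Unset Printing Implicit Defensive.
Import Order.TTheory GRing.Theory Num.Theory.
Local Open Scope ring_scope.

Section Defs.
Variable R : rcfType.

Definition in_image (n : nat) (N : 'M[R]_n) (x : 'cV[R]_n) : Prop :=
  exists y : 'cV[R]_n, x = N *m y.

Definition AinvE (n : nat) (E A : 'M[R]_n) : 'M[R]_n := invmx A *m E.

Definition is_index (n : nat) (E A : 'M[R]_n) (k : nat) : Prop :=
  (forall x, in_image (AinvE E A ^+ k.+1) x <-> in_image (AinvE E A ^+ k) x) /\
  (forall j, (j < k)%N ->
     ~ (forall x, in_image (AinvE E A ^+ j.+1) x <-> in_image (AinvE E A ^+ j) x)).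

(* consistency space C(E,A) = Im((A^{-1}E)^{k*}) with k* the index *)
Definition in_consistency (n : nat) (E A : 'M[R]_n) (x : 'cV[R]_n) : Prop :=
  exists k, is_index E A k /\ in_image (AinvE E A ^+ k) x.

Definition qform (n : nat) (P : 'M[R]_n) (x y : 'cV[R]_n) : R :=
  (x^T *m P *m y) 0 0.

Definition posdef (n : nat) (M : 'M[R]_n) : Prop :=
  forall x : 'cV[R]_n, x != 0 -> 0 < qform M x x.

Definition negdef (n : nat) (M : 'M[R]_n) : Prop :=
  forall x : 'cV[R]_n, x != 0 -> qform M x x < 0.

(* P is a Lyapunov matrix for (E,A): P symmetric, V(x) = x^T P x positive on
   C \ {0}, and dV = 2 x^T P (Atilde x) < 0 for nonzero x in C, where
   Atilde x is the (unique) y in C with (A^{-1}E) y = x. *)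
Definition lyapunov (n : nat) (E A P : 'M[R]_n) : Prop :=
  P^T = P /\
  (forall x, in_consistency E A x -> x != 0 -> 0 < qform P x x) /\
  (forall x y, in_consistency E A x -> x != 0 ->
     in_consistency E A y -> AinvE E A *m y = x ->
     2%:R * qform P x y < 0).
End Defs.

From HB Require Import structures.
From mathcomp Require Import all_boot all_order all_algebra.
From mathcomp Require Import ring lra.
Set Implicit Arguments. Unset Strict Implicit. Unset Printing Implicit Defensive.
Import Order.TTheory GRing.Theory Num.Theory.
Local Open Scope ring_scope.

(* With M = A^-1 E, the map M is injective on C(E,A) = ker C and maps it into
   itself, so along solutions x = M y with y in ker C; hence the derivative
   condition says exactly that Q = P M + M^T P is negative on ker C, and the
   positivity condition that P is positive on ker C. Both LMIs then follow
   from Finsler's lemma: a symmetric S that is positive on ker C becomes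
   positive definite after adding k C^T C for k large. To prove it, split
   x = u + w with u in ker C and w in a complement; S is uniformly positive on
   the first part, C^T C on the second, and the cross term 2 u^T S w is
   absorbed by Young's inequality. The converse is immediate, since C^T C
   vanishes on ker C. *)

Section RowForms.
Variable R : realFieldType.

Definition form n (G : 'M[R]_n) (u v : 'rV[R]_n) : R := (u *m G *m v^T) 0 0.

Definition sqnorm n (u : 'rV[R]_n) : R := form 1%:M u u.

Lemma sqnormE n (u : 'rV[R]_n) : sqnorm u = \sum_i u 0 i ^+ 2.
Proof.
by rewrite /sqnorm /form mulmx1 mxE; apply: eq_bigr => i _; rewrite mxE expr2.
Qed.

Lemma sqnorm_ge0 n (u : 'rV[R]_n) : 0 <= sqnorm u.
Proof. by rewrite sqnormE sumr_ge0 // => i _; exact: sqr_ge0. Qed.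

Lemma sqnorm_eq0 n (u : 'rV[R]_n) : (sqnorm u == 0) = (u == 0).
Proof.
apply/idP/eqP => [|->]; last by rewrite /sqnorm /form !mul0mx mxE.
rewrite sqnormE psumr_eq0 => [/allP u0|i _]; last exact: sqr_ge0.
apply/rowP => i; rewrite mxE; apply/eqP.
by rewrite -sqrf_eq0 (implyP (u0 i _)) ?mem_index_enum.
Qed.

Lemma sqnorm_gt0 n (u : 'rV[R]_n) : (0 < sqnorm u) = (u != 0).
Proof. by rewrite lt_neqAle sqnorm_ge0 andbT eq_sym sqnorm_eq0. Qed.

Lemma sqr_coord_le_sqnorm n (u : 'rV[R]_n) i : u 0 i ^+ 2 <= sqnorm u.
Proof.
by rewrite sqnormE (bigD1 i) //= lerDl sumr_ge0 // => j _; exact: sqr_ge0.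
Qed.

Lemma form_tr n (G : 'M[R]_n) u v : form G u v = form G^T v u.
Proof.
by rewrite /form -[in LHS](trmxK (u *m G *m v^T)) [in LHS]mxE !trmx_mul trmxK mulmxA.
Qed.

Lemma formDl n (G : 'M[R]_n) u u' v :
  form G (u + u') v = form G u v + form G u' v.
Proof. by rewrite /form !mulmxDl mxE. Qed.

Lemma formDr n (G : 'M[R]_n) u v v' :
  form G u (v + v') = form G u v + form G u v'.
Proof. by rewrite /form linearD /= mulmxDr mxE. Qed.

Lemma formZl n (G : 'M[R]_n) s u v : form G (s *: u) v = s * form G u v.
Proof. by rewrite /form -!scalemxAl mxE. Qed.

Lemma formZr n (G : 'M[R]_n) s u v : form G u (s *: v) = s * form G u v.
Proof. by rewrite /form linearZ /= -scalemxAr mxE. Qed.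

Lemma form0l n (G : 'M[R]_n) v : form G 0 v = 0.
Proof. by rewrite /form !mul0mx mxE. Qed.

Lemma formD n (G H : 'M[R]_n) u v : form (G + H) u v = form G u v + form H u v.
Proof. by rewrite /form mulmxDr mulmxDl mxE. Qed.

Lemma formZ n (G : 'M[R]_n) s u v : form (s *: G) u v = s * form G u v.
Proof. by rewrite /form -scalemxAr -scalemxAl mxE. Qed.

Lemma formN n (G : 'M[R]_n) u v : form (- G) u v = - form G u v.
Proof. by rewrite /form mulmxN mulNmx mxE. Qed.

Lemma form_mulmx p n (G : 'M[R]_n) (B : 'M[R]_(p, n)) u v :
  form (B *m G *m B^T) u v = form G (u *m B) (v *m B).
Proof. by rewrite /form trmx_mul !mulmxA. Qed.

Lemma form_expand n (G : 'M[R]_n) u v s : G^T = G ->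
  form G (u + s *: v) (u + s *: v) =
    form G u u + 2 * s * form G u v + s ^+ 2 * form G v v.
Proof.
move=> sG; rewrite !(formDl, formDr, formZl, formZr) [form G v u]form_tr sG.
ring.
Qed.

Lemma form_CauchySchwarz n (G : 'M[R]_n) u v : G^T = G ->
  (forall w, 0 <= form G w w) -> form G u v ^+ 2 <= form G u u * form G v v.
Proof.
move=> sG G_ge0.
have quad s : 0 <= form G u u + 2 * s * form G u v + s ^+ 2 * form G v v.
  by rewrite -form_expand.
move: quad; set a := form G u u; set b := form G u v; set c := form G v v => quad.
have [c_gt0|] := ltP 0 c.
  have := quad (- b / c).
  have -> : a + 2 * (- b / c) * b + (- b / c) ^+ 2 * c = (a * c - b ^+ 2) / c.
    by field; rewrite gt_eqF.
  by rewrite pmulr_lge0 ?invr_gt0 // subr_ge0.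
rewrite le_eqVlt ltNge G_ge0 orbF => /eqP c0.
have [b0|b_neq0] := eqVneq b 0; first by rewrite b0 c0 expr0n mulr0.
(* a line with nonzero slope through (0, a) takes negative values *)
have := quad (- (a + 1) / (2 * b)).
have -> : a + 2 * (- (a + 1) / (2 * b)) * b + (- (a + 1) / (2 * b)) ^+ 2 * c = -1.
  by rewrite c0; field.
lra.
Qed.

Lemma form_bounded n (G : 'M[R]_n) :
  exists2 b, 0 <= b & forall u, form G u u <= b * sqnorm u.
Proof.
exists (\sum_j \sum_i `|G i j|); first by do 2!apply: sumr_ge0 => ? _.
move=> u; rewrite /form mxE mulr_suml; apply: ler_sum => j _.
rewrite ?mxE !mulr_suml; apply: ler_sum => i _; rewrite ?mxE.
have ui := sqr_coord_le_sqnorm u i; have uj := sqr_coord_le_sqnorm u j.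
rewrite -[u 0 i ^+ 2]real_normK ?num_real // in ui.
rewrite -[u 0 j ^+ 2]real_normK ?num_real // in uj.
have prod_le : `|u 0 i| * `|u 0 j| <= sqnorm u.
  by have := normr_ge0 (u 0 i); have := normr_ge0 (u 0 j); nra.
apply: le_trans (ler_norm _) _; rewrite mulrAC !normrM mulrC.
by apply: ler_wpM2l.
Qed.

Lemma form_posdef_unitmx n (G : 'M[R]_n) :
  (forall u, u != 0 -> 0 < form G u u) -> G \in unitmx.
Proof.
move=> G_pos; rewrite -row_free_unit -kermx_eq0; apply/eqP/row_matrixP => i.
rewrite row0; apply/eqP; apply: contraT => /G_pos.
by rewrite /form -row_mul mulmx_ker row0 mul0mx mxE ltxx.
Qed.

Lemma form_coercive n (G : 'M[R]_n) : G^T = G ->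
  (forall u, u != 0 -> 0 < form G u u) ->
  exists2 c, 0 < c & forall u, c * sqnorm u <= form G u u.
Proof.
move=> sG G_pos.
have G_ge0 w : 0 <= form G w w.
  by have [->|/G_pos/ltW //] := eqVneq w 0; rewrite form0l.
(* the rows of G^-T are dual to the coordinate vectors *)
pose e i : 'rV[R]_n := delta_mx 0 i *m (invmx G)^T.
have form_e u i : form G u (e i) = u 0 i.
  rewrite /form /e trmx_mul trmxK trmx_delta mulmxA -(mulmxA u).
  by rewrite mulmxV ?form_posdef_unitmx // mulmx1 -colE mxE.
pose b := \sum_i form G (e i) (e i).
have b_ge0 : 0 <= b by apply: sumr_ge0.
exists (b + 1)^-1 => [|u]; first by rewrite invr_gt0; lra.
rewrite mulrC -ler_pdivlMr ?invr_gt0 ?invrK; last by lra.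
have : sqnorm u <= form G u u * b.
  rewrite sqnormE /b mulr_sumr; apply: ler_sum => i _.
  by rewrite -form_e form_CauchySchwarz.
by have := G_ge0 u; nra.
Qed.

Lemma form_coercive_on p n (B : 'M[R]_(p, n)) (G : 'M[R]_n) : G^T = G ->
  (forall u, (u <= B)%MS -> u != 0 -> 0 < form G u u) ->
  exists2 c, 0 < c & forall u, (u <= B)%MS -> c * sqnorm u <= form G u u.
Proof.
move=> sG G_pos; have B'_free : row_free (row_base B) by exact: row_base_free.
have sub_B' u : (u <= row_base B)%MS = (u <= B)%MS by rewrite eq_row_base.
move: (row_base B) B'_free sub_B' => B' B'_free sub_B'.
have [c c_gt0 G'_ge] :
    exists2 c, 0 < c & forall v, c * sqnorm v <= form (B' *m G *m B'^T) v v.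
  apply: form_coercive => [|v v_neq0]; first by rewrite !trmx_mul trmxK sG mulmxA.
  by rewrite form_mulmx G_pos ?mulmx_free_eq0 // -sub_B' submxMl.
have [g g_ge0 B'_le] := form_bounded (B' *m B'^T).
exists (c / (g + 1)) => [|u]; first by rewrite divr_gt0 //; lra.
rewrite -sub_B' => /submxP [v ->].
have := G'_ge v; rewrite form_mulmx => G'_ge_v.
have := B'_le v; rewrite -{1}[B']mulmx1 form_mulmx => B'_le_v.
have := sqnorm_ge0 v; have := sqnorm_ge0 (v *m B').
rewrite mulrAC ler_pdivrMr; last by lra.
rewrite /sqnorm in G'_ge_v B'_le_v *; nra.
Qed.

Lemma form1_young n (u v : 'rV[R]_n) c : 0 < c ->
  - (c / 2 * sqnorm u + 2 / c * sqnorm v) <= 2 * form 1%:M u v.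
Proof.
move=> c_gt0; have := sqnorm_ge0 (u + (2 / c) *: v).
rewrite /sqnorm form_expand ?trmx1 // => sq_ge0.
rewrite -subr_ge0 opprK.
have -> : 2 * form 1%:M u v + (c / 2 * form 1%:M u u + 2 / c * form 1%:M v v) =
  c / 2 * (form 1%:M u u + 2 * (2 / c) * form 1%:M u v + (2 / c) ^+ 2 * form 1%:M v v).
  by field; rewrite gt_eqF.
by rewrite mulr_ge0 // divr_ge0 // ltW.
Qed.

Lemma kermx_compl_decomp n m (D : 'M[R]_(n, m)) (y : 'rV[R]_n) :
  exists u w, [/\ y = u + w, u *m D = 0 & (w <= (kermx D)^C)%MS].
Proof.
have /sub_addsmxP[[u w] /= ->] : (y <= kermx D + (kermx D)^C)%MS.
  by apply/submx_full/addsmx_compl_full.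
exists (u *m kermx D), (w *m (kermx D)^C)%MS.
by split; [|rewrite -mulmxA mulmx_ker mulmx0|exact: submxMl].
Qed.

Lemma compl_kermx_mul_eq0 n m (D : 'M[R]_(n, m)) (w : 'rV[R]_n) :
  (w <= (kermx D)^C)%MS -> w *m D = 0 -> w = 0.
Proof.
move=> wW wD0; apply/eqP.
by rewrite -submx0 -(capmx_compl (kermx D)) sub_capmx wW sub_kermx wD0 eqxx.
Qed.

Lemma finsler_form n m (S : 'M[R]_n) (D : 'M[R]_(n, m)) : S^T = S ->
  (forall u, u *m D = 0 -> u != 0 -> 0 < form S u u) ->
  exists2 k, 0 <= k & forall y, y != 0 -> 0 < form (S + k *: (D *m D^T)) y y.
Proof.
move=> sS S_pos.
have sDD : (D *m D^T)^T = D *m D^T by rewrite trmx_mul trmxK.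
have formDD u : form (D *m D^T) u u = sqnorm (u *m D).
  by rewrite -[D in D *m _]mulmx1 form_mulmx.
have [c1 c1_gt0 S_ge] : exists2 c, 0 < c &
    forall u, (u <= kermx D)%MS -> c * sqnorm u <= form S u u.
  by apply: form_coercive_on => // u; rewrite sub_kermx => /eqP; exact: S_pos.
have [c2 c2_gt0 DD_ge] : exists2 c, 0 < c &
    forall w, (w <= (kermx D)^C)%MS -> c * sqnorm w <= form (D *m D^T) w w.
  apply: form_coercive_on => // w wW; apply: contraNT.
  rewrite formDD sqnorm_gt0 negbK.
  by move=> /eqP /(compl_kermx_mul_eq0 wW) ->.
have [a a_ge0 NS_le] := form_bounded (- S).
have [b b_ge0 SS_le] := form_bounded (S *m S).
have c1'_gt0 : 0 < 2 / c1 by rewrite divr_gt0.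
have b'_ge0 : 0 <= 2 / c1 * b + a + 1.
  by have := mulr_ge0 (ltW c1'_gt0) b_ge0; lra.
exists ((2 / c1 * b + a + 1) / c2) => [|y]; first by rewrite divr_ge0 // ltW.
have [u [w [-> uD0 wW]]] := kermx_compl_decomp D y => uw_neq0.
have uK : (u <= kermx D)%MS by rewrite sub_kermx uD0.
(* Young's inequality, spending half of c1 |u|^2 on the mixed term *)
have cross : form S u w = form 1%:M u (w *m S).
  by rewrite /form mulmx1 trmx_mul sS mulmxA.
have := form1_young u (w *m S) c1_gt0; rewrite -cross => young.
have wS_le : sqnorm (w *m S) <= b * sqnorm w.
  by rewrite /sqnorm /form mulmx1 trmx_mul sS !mulmxA -(mulmxA w) SS_le.
have DD_uw : form (D *m D^T) (u + w) (u + w) = form (D *m D^T) w w.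
  by rewrite -[D in D *m _]mulmx1 !form_mulmx mulmxDl uD0 add0r.
have S_uw : form S (u + w) (u + w) = form S u u + 2 * form S u w + form S w w.
  by have := form_expand u w 1 sS; rewrite scale1r mulr1 expr1n mul1r.
have uw_gt0 : 0 < c1 / 2 * sqnorm u + sqnorm w.
  have [u0|u_neq0] := eqVneq u 0.
    by move: uw_neq0; rewrite u0 [sqnorm 0]form0l mulr0 !add0r sqnorm_gt0.
  by rewrite ltr_pwDl ?sqnorm_ge0 // mulr_gt0 ?divr_gt0 ?sqnorm_gt0.
have wS_le' : 2 / c1 * sqnorm (w *m S) <= 2 / c1 * b * sqnorm w.
  by rewrite -[2 / c1 * b * _]mulrA ler_wpM2l // ltW.
have DD_ge' : (2 / c1 * b + a + 1) * sqnorm w <=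
    (2 / c1 * b + a + 1) / c2 * form (D *m D^T) w w.
  rewrite -[X in X * sqnorm w](divfK (lt0r_neq0 c2_gt0)) -[_ / c2 * c2 * _]mulrA.
  by rewrite ler_wpM2l ?divr_ge0 ?DD_ge // ltW.
have := S_ge u uK; have := NS_le w; rewrite formN => S_ge_u NS_le_w.
rewrite formD formZ DD_uw S_uw; lra.
Qed.

End RowForms.

Section QuadraticForms.
Variable R : rcfType.

Lemma qformE n (G : 'M[R]_n) x y : qform G x y = form G x^T y^T.
Proof. by rewrite /qform /form trmxK. Qed.

Lemma posdefE n (G : 'M[R]_n) : posdef G <-> forall u, u != 0 -> 0 < form G u u.
Proof.
split=> G_pos u u_neq0; last by rewrite qformE G_pos ?trmx_eq0.
by rewrite -[u]trmxK -qformE G_pos ?trmx_eq0.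
Qed.

Lemma negdef_posdefN n (G : 'M[R]_n) : negdef G <-> posdef (- G).
Proof.
by split=> G_def x /G_def; rewrite !qformE formN ?oppr_gt0 // oppr_gt0.
Qed.

Lemma qform_add_gram m n (S : 'M[R]_n) (C : 'M[R]_(m, n)) k x : C *m x = 0 ->
  qform (S + k *: (C^T *m C)) x x = qform S x x.
Proof.
move=> Cx0; rewrite /qform mulmxDr mulmxDl -scalemxAr -scalemxAl -!mulmxA Cx0.
by rewrite !mulmx0 scaler0 addr0.
Qed.

Lemma finsler m n (S : 'M[R]_n) (C : 'M[R]_(m, n)) : S^T = S ->
  (forall x, C *m x = 0 -> x != 0 -> 0 < qform S x x) ->
  exists2 k, 0 <= k & posdef (S + k *: (C^T *m C)).
Proof.
move=> sS S_pos; have [|k k_ge0 Sk_pos] := @finsler_form _ _ _ S C^T sS.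
  move=> u uC0 u_neq0; rewrite -[u]trmxK -qformE S_pos ?trmx_eq0 //.
  by rewrite -[C]trmxK -trmx_mul uC0 trmx0.
by exists k => //; apply/posdefE; move: Sk_pos; rewrite trmxK.
Qed.

Lemma qform_lyap_deriv n (P M : 'M[R]_n) x : P^T = P ->
  qform (P *m M + M^T *m P) x x = 2 * qform P (M *m x) x.
Proof.
move=> sP; rewrite !qformE formD [form (P *m M) _ _]form_tr trmx_mul sP.
by rewrite /form !mulmxA -trmx_mul mulr2n mulrDl mul1r.
Qed.

End QuadraticForms.

Section ConsistencySpace.
Variable R : rcfType.

Lemma in_image_rank n (N N' : 'M[R]_n) :
  (forall x, in_image N x -> in_image N' x) -> (\rank N <= \rank N')%N.
Proof.
move=> sNN'; rewrite -mxrank_tr -[X in (_ <= X)%N]mxrank_tr; apply: mxrankS.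
apply/row_subP => i; rewrite -tr_col.
have [y ->] := sNN' (col i N) (ex_intro _ (delta_mx i 0) (colE i N)).
by rewrite trmx_mul submxMl.
Qed.

(* ker N is contained in ker (M N), and the two have the same dimension. *)
Lemma mulmx_ker_rank n (M N : 'M[R]_n) (z : 'cV[R]_n) :
  (\rank N <= \rank (M *m N))%N ->
  M *m N *m z = 0 -> N *m z = 0.
Proof.
move=> rkN MNz0; apply: trmx_inj; rewrite trmx0 trmx_mul.
have kerN_MN : (kermx N^T <= kermx (M *m N)^T)%MS.
  by rewrite sub_kermx trmx_mul mulmxA mulmx_ker mul0mx.
have kerMN_N : (kermx (M *m N)^T <= kermx N^T)%MS.
  rewrite -(mxrank_leqif_sup kerN_MN).2 !mxrank_ker !mxrank_tr.
  by rewrite eqn_leq !leq_sub2l ?mxrankM_maxr.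
apply/eqP; rewrite -sub_kermx; apply: submx_trans kerMN_N.
by rewrite sub_kermx -trmx_mul MNz0 trmx0.
Qed.

Lemma consistency_AinvE n (E A : 'M[R]_n) x :
  in_consistency E A x -> in_consistency E A (AinvE E A *m x).
Proof.
case=> k [[im_stable ?] [z ->]]; exists k; split=> //.
by apply/im_stable; exists z; rewrite exprS -mulmxE mulmxA.
Qed.

Lemma consistency_AinvE_eq0 n (E A : 'M[R]_n) x :
  in_consistency E A x -> AinvE E A *m x = 0 -> x = 0.
Proof.
case=> k [[im_stable _] [z ->]]; rewrite mulmxA; apply: mulmx_ker_rank.
by rewrite mulmxE -exprS in_image_rank // => y /im_stable.
Qed.

End ConsistencySpace.

Theorem lemma2 (R : rcfType) (n m : nat) (E A : 'M[R]_n) (C : 'M[R]_(m, n))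
    (hA : A \in unitmx)
    (hC : forall x : 'cV[R]_n, in_consistency E A x <-> C *m x = 0)
    (P : 'M[R]_n) (hP : P^T = P) :
  lyapunov E A P <->
  exists k1 k2 : R, 0 <= k1 /\ 0 <= k2 /\
    posdef (P + k1 *: (C^T *m C)) /\
    negdef (P *m invmx A *m E + E^T *m (invmx A)^T *m P - k2 *: (C^T *m C)).
Proof.
have -> : P *m invmx A *m E + E^T *m (invmx A)^T *m P =
    P *m AinvE E A + (AinvE E A)^T *m P by rewrite /AinvE -mulmxA trmx_mul.
set Q := P *m AinvE E A + _.
have sQ : (- Q)^T = - Q.
  by rewrite /Q raddfN raddfD /= [(_^T *m P)^T]trmx_mul trmxK trmx_mul hP addrC.
split.
- case=> _ [V_pos dV_neg].
  have [k1 k1_ge0 hk1] := finsler hP (fun x Cx0 => V_pos x ((hC x).2 Cx0)).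
  have [|k2 k2_ge0 hk2] := finsler (C := C) sQ.
    move=> x Cx0 x_neq0; have /hC x_cons := Cx0.
    rewrite qformE formN oppr_gt0 -qformE qform_lyap_deriv //.
    apply: dV_neg => //; first exact: consistency_AinvE.
    by apply: contra_neq x_neq0; exact: consistency_AinvE_eq0.
  exists k1, k2; do 3!split=> //.
  by apply/negdef_posdefN; rewrite opprB addrC.
- case=> k1 [k2 [_ [_ [V_pos dV_neg]]]]; split=> //; split.
    move=> x /hC Cx0 /V_pos; by rewrite qform_add_gram.
  move=> x y _ x_neq0 /hC Cy0 Ay_x.
  have y_neq0 : y != 0 by apply: contra_neq x_neq0 => y0; rewrite -Ay_x y0 mulmx0.
  have := dV_neg y y_neq0.
  by rewrite -scaleNr qform_add_gram // qform_lyap_deriv // Ay_x.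
Qed.
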